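(* Let $X$ be a non-trivial separated locally convex space with topology $\sigma(X,X^* )$, $T$ an arbitrary index set, $f,g,h_t:X\to\overline{\mathbb{R}}$ ($t\in T$) proper convex functions, $A=\{x\in X:h_t(x)\le0\ \forall t\in T\}$, and $(P)$ the problem $\inf_{x\in A}\{f(x)-g(x)\}$. Let $B:=\{0\}\times\{0\}\times\,]0,+\infty[\,\times\mathbb{R}\subseteq W\times\mathbb{R}$. If $v(P)\in\mathbb{R}$, then $$\operatorname{epi}(f-g+\delta_A)^c\cap B=\{(0,0,\delta,\beta):\delta>0,\ \beta\ge -v(P)\}=\bigcap_{x\in X}\operatorname{epi}\big(c'(\cdot,x)-v(P)\big).$$ Consequently, $\operatorname{epi}(f-g+\delta_A)^c\cap B$ is an e$'$-convex set.
   Context: $X^*$ is the topological dual of $X$, $\langle x,x^*\rangle$ the pairing, $W:=X^*\times X^*\times\mathbb{R}$. The coupling $c:X\times W\to\overline{\mathbb{R}}$ is $c(x,(x^*,y^*,\alpha))=\langle x,x^*\rangle$ if $\langle x,y^*\rangle<\alpha$ and $+\infty$ otherwise; $c'((x^*,y^*,\alpha),x):=c(x,(x^*,y^*,\alpha))$. For $\varphi:X\to\overline{\mathbb{R}}$, $\varphi^c(w):=\sup_{x\in X}\{c(x,w)-\varphi(x)\}$, with the convention $(+\infty)+(-\infty)=(-\infty)+(+\infty)=(+\infty)-(+\infty)=(-\infty)-(-\infty)=-\infty$. $\delta_A$ is the indicator of $A$ ($0$ on $A$, $+\infty$ elsewhere); by convention $f(x)-g(x)=+\infty$ for $x\notin\operatorname{dom}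 f$. For $\psi:W\to\overline{\mathbb{R}}$, $\operatorname{epi}\psi=\{(w,\beta)\in W\times\mathbb{R}:\psi(w)\le\beta\}$. A function $k:W\to\overline{\mathbb{R}}$ is e$'$-convex if it is convex and is the pointwise supremum of a family of functions of the form $c'(\cdot,x)-\beta$ with $x\in X$, $\beta\in\mathbb{R}$. A set $D\subseteq W\times\mathbb{R}$ is e$'$-convex if $D=\operatorname{epi}k$ for some e$'$-convex function $k$. $v(P)$ is the optimal value of $(P)$. *)

From HB Require Import structures.
From mathcomp Require Import all_boot all_algebra all_classical all_reals all_analysis.
Import GRing.Theory Num.Theory.
Set Implicit Arguments. Unset Strict Implicit. Unset Printing Implicit Defensive.
Local Open Scope classical_set_scope.
Local Open Scope ring_scope.

Section Defs.
Variables (R : realType) (X : tvsType R).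

Record dual := Dual {
  dfun :> X -> R ;
  dfunD : forall x y : X, dfun (x + y) = dfun x + dfun y ;
  dfunZ : forall (a : R) (x : X), dfun (a *: x) = a * dfun x ;
  dfun_cont : continuous (dfun : X -> R^o) }.

Lemma dual0_D (x y : X) : (fun _ : X => 0 : R) (x + y) = (fun _ : X => 0 : R) x + (fun _ : X => 0 : R) y.
Proof. by rewrite addr0. Qed.
Lemma dual0_Z (a : R) (x : X) : (fun _ : X => 0 : R) (a *: x) = a * (fun _ : X => 0 : R) x.
Proof. by rewrite mulr0. Qed.
Lemma dual0_cont : continuous ((fun _ : X => 0 : R) : X -> R^o).
Proof. exact: cst_continuous. Qed.

Definition dual0 : dual := Dual dual0_D dual0_Z dual0_cont.

Definition W := (dual * dual * R)%type.

Local Open Scope ereal_scope.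

Definition cpl (x : X) (w : W) : \bar R :=
  if (w.1.2 x < w.2)%R then (w.1.1 x)%:E else +oo.
Definition cpl' (w : W) (x : X) : \bar R := cpl x w.

(* c-conjugate; MathComp's extended-real subtraction satisfies exactly the
   conventions (+oo)+(-oo) = (-oo)+(+oo) = (+oo)-(+oo) = (-oo)-(-oo) = -oo *)
Definition cconj (phi : X -> \bar R) (w : W) : \bar R :=
  ereal_sup [set cpl x w - phi x | x in [set: X]].

Definition epi (psi : W -> \bar R) : set (W * R) :=
  [set p | psi p.1 <= p.2%:E].

Definition indic (A : set X) (x : X) : \bar R := if `[< A x >] then 0 else +oo.

Definition fsub (f g : X -> \bar R) (x : X) : \bar R :=
  if f x < +oo then f x - g x else +oo.

(* f - g + delta_A : equal to f - g on A and +oo outside A *)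
Definition fgA (f g : X -> \bar R) (A : set X) (x : X) : \bar R :=
  if `[< A x >] then fsub f g x else +oo.

Definition convex_fun (f : X -> \bar R) : Prop :=
  forall (x y : X) (a b l : R), (0 <= l <= 1)%R ->
    f x <= a%:E -> f y <= b%:E ->
    f (l *: x + (1 - l) *: y)%R <= (l * a + (1 - l) * b)%R%:E.

Definition proper_fun (f : X -> \bar R) : Prop :=
  (forall x, f x != -oo) /\ exists x, f x < +oo.

(* convexity of a function on W = X^* x X^* x R (convex epigraph); w3 is the
   convex combination l w1 + (1-l) w2, the dual components being compared
   pointwise *)
Definition convexW (k : W -> \bar R) : Prop :=
  forall (w1 w2 w3 : W) (a b l : R), (0 <= l <= 1)%R ->
    (forall x, w3.1.1 x = l * w1.1.1 x + (1 - l) * w2.1.1 x)%R ->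
    (forall x, w3.1.2 x = l * w1.1.2 x + (1 - l) * w2.1.2 x)%R ->
    (w3.2 = l * w1.2 + (1 - l) * w2.2)%R ->
    k w1 <= a%:E -> k w2 <= b%:E -> k w3 <= (l * a + (1 - l) * b)%R%:E.

Definition econvex_fun (k : W -> \bar R) : Prop :=
  convexW k /\
  exists S : set (X * R),
    forall w, k w = ereal_sup [set cpl' w p.1 - p.2%:E | p in S].

Definition econvex_set (D : set (W * R)) : Prop :=
  exists k, econvex_fun k /\ D = epi k.

Definition Bset : set (W * R) :=
  [set p | p.1.1.1 = dual0 /\ p.1.1.2 = dual0 /\ (0 < p.1.2)%R].

End Defs.

From HB Require Import structures.
From mathcomp Require Import all_boot all_order all_algebra all_classical all_reals all_analysis.
From mathcomp Require Import lra.
Import Order.TTheory GRing.Theory Num.Theory.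
Local Open Scope classical_set_scope.
Local Open Scope ring_scope.

(* For [d > 0] the coupling [c(x, (0, 0, d))] vanishes identically, so
   [phi^c (0, 0, d) = - inf phi]; for [phi = f - g + delta_A] this is [- v(P)].
   Conversely, [(w, b)] lies in every [epi (c'(., x) - v)] iff
   [<x, x*> - v <= b] and [<x, y*> < a] for all [x]; since a linear functional
   bounded above vanishes, this means [x* = y* = 0], [a > 0] and [b >= - v].
   The resulting set is the epigraph of the e'-convex function
   [w |-> sup_x c'(w, x) - v]. *)

Section ZeroSlice.
Variables (R : realType) (X : tvsType R).
Implicit Types (w : W X) (v b d : R).

Lemma dual_ub_eq0 (phi : dual X) c : (forall x, phi x <= c) -> forall x, phi x = 0.
Proof.
move=> phi_ub x; apply/eqP/negPn/negP => phix_neq0.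
have := phi_ub (((`|c| + 1) / phi x) *: x).
rewrite dfunZ mulrVK ?unitfE //.
have := ler_norm c; lra.
Qed.

Lemma dual_eq0 (phi : dual X) : (forall x, phi x = 0) -> phi = dual0 X.
Proof.
case: phi => p pD pZ pc /= p0.
have p_eq0 : p = (fun _ => 0) by apply: funext.
by subst p; congr Dual; exact: Prop_irrelevance.
Qed.

Definition zero_slice v : set (W X * R) :=
  [set p | exists d b, p = ((dual0 X, dual0 X, d), b) /\ 0 < d /\ - v <= b].

Lemma zero_sliceE v w b :
  zero_slice v (w, b) <->
  [/\ w.1.1 = dual0 X, w.1.2 = dual0 X, 0 < w.2 & - v <= b].
Proof.
case: w => [[p q] e] /=; split.
- by case=> d [b' [[-> -> -> ->] [d0 vb]]].
- by case=> -> -> e0 vb; exists e, b.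
Qed.

Lemma cpl_dual0 d x : 0 < d -> cpl x (dual0 X, dual0 X, d) = 0%E.
Proof. by move=> d0; rewrite /cpl /= d0. Qed.

Lemma cpl_sub_le_zero_slice v w b :
  (forall x, (cpl x w - v%:E <= b%:E)%E) <-> zero_slice v (w, b).
Proof.
rewrite zero_sliceE; split.
- move=> cpl_le.
  have cplP x : w.1.2 x < w.2 /\ w.1.1 x - v <= b.
    move: (cpl_le x); rewrite /cpl; case: ifP => _.
      by rewrite -EFinB lee_fin.
    by rewrite addye // leye_eq.
  have Z1 : forall x, w.1.1 x = 0.
    by apply: (@dual_ub_eq0 _ (b + v)) => x; rewrite -lerBlDr; case: (cplP x).
  have Z2 : forall x, w.1.2 x = 0.
    by apply: (@dual_ub_eq0 _ w.2) => x; apply: ltW; case: (cplP x).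
  split; [exact: dual_eq0 | exact: dual_eq0 | |].
  + by case: (cplP 0); rewrite Z2.
  + by case: (cplP 0); rewrite Z1 sub0r.
- case: w => [[p q] e] /= [-> -> e0 vb] x.
  by rewrite cpl_dual0 // add0e lee_fin.
Qed.

Lemma zero_slice_bigcap v :
  zero_slice v = \bigcap_(x in [set: X]) epi (fun w => (cpl' w x - v%:E)%E).
Proof.
apply/seteqP; split=> -[w b].
- by move/cpl_sub_le_zero_slice => cpl_le x _; exact: cpl_le.
- by move=> cpl_le; apply/cpl_sub_le_zero_slice => x; exact: cpl_le x I.
Qed.

Lemma cconj_dual0 (phi : X -> \bar R) d :
  0 < d -> cconj phi (dual0 X, dual0 X, d) = (- ereal_inf (range phi))%E.
Proof.
move=> d0; rewrite /cconj -ereal_supN image_comp; congr ereal_sup.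
by apply: eq_imagel => x _ /=; rewrite cpl_dual0 // sub0e.
Qed.

Lemma epi_cconj_Bset (phi : X -> \bar R) v :
  ereal_inf (range phi) = v%:E -> epi (cconj phi) `&` @Bset R X = zero_slice v.
Proof.
move=> inf_phi; apply/seteqP; split=> -[[[p q] d] b].
- case=> conj_le [/= p0 [/= q0 /= d0]]; subst p q.
  apply/zero_sliceE; split=> //.
  by move: conj_le; rewrite /epi /= cconj_dual0 // inf_phi -EFinN lee_fin.
- move/zero_sliceE => /= [-> -> d0 vb]; split=> //=.
  by rewrite /epi /= cconj_dual0 // inf_phi -EFinN lee_fin.
Qed.

Definition sup_cpl'_sub v w : \bar R :=
  ereal_sup [set (cpl' w q.1 - q.2%:E)%E | q in [set q : X * R | q.2 = v]].

Lemma epi_sup_cpl'_sub v : epi (sup_cpl'_sub v) = zero_slice v.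
Proof.
apply/seteqP; split=> -[w b] /=; rewrite /epi /= -cpl_sub_le_zero_slice.
- by move=> sup_le x; apply: le_trans sup_le; apply: ereal_sup_ubound; exists (x, v).
- by move=> cpl_le; apply: ge_ereal_sup => _ [[x r] /= -> <-]; exact: cpl_le.
Qed.

Lemma convexW_sup_cpl'_sub v : convexW (sup_cpl'_sub v).
Proof.
move=> w1 w2 w3 a b l /andP[l0 l1] e1 e2 e3.
have epiP w c : (sup_cpl'_sub v w <= c%:E)%E <-> zero_slice v (w, c).
  by rewrite -epi_sup_cpl'_sub.
move=> /epiP/zero_sliceE [Z11 Z12 d1 va] /epiP/zero_sliceE [Z21 Z22 d2 vb].
apply/epiP/zero_sliceE; split.
- by apply: dual_eq0 => x; rewrite e1 Z11 Z21 /= !mulr0 addr0.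
- by apply: dual_eq0 => x; rewrite e2 Z12 Z22 /= !mulr0 addr0.
- rewrite e3; nra.
- nra.
Qed.

Lemma econvex_zero_slice v : econvex_set (zero_slice v).
Proof.
exists (sup_cpl'_sub v); split; last by rewrite epi_sup_cpl'_sub.
split; first exact: convexW_sup_cpl'_sub.
by exists [set q : X * R | q.2 = v].
Qed.

Lemma ereal_inf_fgA (f g : X -> \bar R) (A : set X) :
  ereal_inf (range (fgA f g A)) = ereal_inf [set fsub f g x | x in A].
Proof.
apply/le_anti/andP; split.
- apply: le_ereal_inf_tmp => _ [x Ax <-]; apply: ereal_inf_lbound.
  by exists x => //; rewrite /fgA asboolT.
- apply: le_ereal_inf_tmp => _ [x _ <-]; rewrite /fgA.
  case: asboolP => Ax; last exact: leey.
  by apply: ereal_inf_lbound; exists x.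
Qed.

End ZeroSlice.

Theorem lemma4p7 (R : realType) (X : tvsType R) (T : Type)
  (f g : X -> \bar R) (h : T -> X -> \bar R) :
  hausdorff_space X ->
  (exists x : X, x != 0) ->
  convex_fun f -> proper_fun f ->
  convex_fun g -> proper_fun g ->
  (forall t, convex_fun (h t)) -> (forall t, proper_fun (h t)) ->
  let A := [set x : X | forall t, (h t x <= 0)%E] in
  let vP := ereal_inf [set fsub f g x | x in A] in
  forall v : R, vP = v%:E ->
  let D := epi (cconj (fgA f g A)) `&` @Bset R X in
  D = [set p | exists (d b : R), p = ((@dual0 R X, @dual0 R X, d), b) /\ 0 < d /\ - v <= b]
  /\ [set p | exists (d b : R), p = ((@dual0 R X, @dual0 R X, d), b) /\ 0 < d /\ - v <= b]
     = \bigcap_(x in [set: X]) epi (fun w => (cpl' w x - v%:E)%E)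
  /\ econvex_set D.
Proof.
move=> _ _ _ _ _ _ _ _ A vP v vP_v D.
have D_slice : D = @zero_slice R X v by apply: epi_cconj_Bset; rewrite ereal_inf_fgA.
split; first exact: D_slice.
split; first exact: zero_slice_bigcap.
by rewrite D_slice; exact: econvex_zero_slice.
Qed.
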